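(* Let $N$ be an odd natural number and let $b_1,\dots,b_N$ be integers such that $b_1,b_3,b_5,\dots,b_N$ (the entries with odd index) are all even. Suppose $p,q$ are relatively prime integers with $q\neq 0$ and $p/q=[b_1,b_2,\dots,b_N]$, where $$[b_1,b_2,\dots,b_N]=b_1-\cfrac{1}{b_2-\cfrac{1}{b_3-\cdots-\cfrac{1}{b_N}}}$$ (all intermediate denominators being nonzero). Then $$p\equiv(-1)^{\frac{N-1}{2}}(b_1+b_3+\cdots+b_N)\pmod 4.$$ *)

From mathcomp Require Import all_boot all_order all_algebra.
Set Implicit Arguments. Unset Strict Implicit. Unset Printing Implicit Defensive.
Import Order.TTheory GRing.Theory Num.Theory.
Local Open Scope ring_scope.

(* Negative (Hirzebruch–Jung) continued fraction
   [b1, b2, ..., bN] = b1 - 1/(b2 - 1/(... - 1/bN)), valued in rat.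
   The empty sequence is given the junk value 0 (never used: N is odd). *)
Fixpoint ncf (s : seq int) : rat :=
  match s with
  | [::] => 0
  | b :: s' => if s' is [::] then b%:~R else b%:~R - (ncf s')^-1
  end.

Fixpoint ncf_ok (s : seq int) : bool :=
  match s with
  | [::] => true
  | b :: s' => if s' is [::] then true else ncf_ok s' && (ncf s' != 0)
  end.

From mathcomp Require Import all_boot all_order all_algebra.
From mathcomp Require Import zify ring.
Set Implicit Arguments. Unset Strict Implicit. Unset Printing Implicit Defensive.
Import Order.TTheory GRing.Theory Num.Theory.
Local Open Scope ring_scope.

(* Clearing denominators in [b_1, ..., b_N] by the continuant recursion
   (n, d) |-> (b n - d, n) gives a fraction n/d in lowest terms, so p = +-n.
   Induction on the odd length, two entries at a time and using that the
   entries of odd index are even, shows that d is odd and that n is congruent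
   mod 4 to the even number b_1 + b_3 + ... + b_N.  An even number is
   congruent mod 4 to its negative, so no sign matters. *)

Lemma dvdz4_sign (x y : int) (i j : nat) :
  (2 %| y)%Z -> (4 %| x - y)%Z -> (4 %| (-1) ^+ i * x - (-1) ^+ j * y)%Z.
Proof.
rewrite -[(-1) ^+ i]signr_odd -[(-1) ^+ j]signr_odd.
by case: (odd i); case: (odd j); rewrite /= ?expr0 ?expr1 ?mul1r ?mulN1r; lia.
Qed.

Lemma coprimez_frac_sign (p q n d : int) :
  coprimez p q -> coprimez n d -> q != 0 -> d != 0 ->
  p%:~R / q%:~R = n%:~R / d%:~R :> rat -> exists i : nat, p = (-1) ^+ i * n.
Proof.
move=> cpq cnd q0 d0 /(congr1 numq); rewrite !coprimeq_num // -!neqr0_sign // => E.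
by exists ((q < 0)%R + (d < 0)%R)%N; rewrite exprD -mulrA -E signrMK.
Qed.

Fixpoint ncf_frac (s : seq int) : int * int :=
  if s is b :: s' then
    (b * (ncf_frac s').1 - (ncf_frac s').2, (ncf_frac s').1)
  else (1, 0).

Lemma ncf_frac_cons b s :
  ncf_frac (b :: s) = (b * (ncf_frac s).1 - (ncf_frac s).2, (ncf_frac s).1).
Proof. by []. Qed.

Lemma ncf_cons2 b c s : ncf [:: b, c & s] = b%:~R - (ncf (c :: s))^-1.
Proof. by []. Qed.

Lemma coprimez_ncf_frac s : coprimez (ncf_frac s).1 (ncf_frac s).2.
Proof.
elim: s => [//|b s IH].
by rewrite ncf_frac_cons /coprimez /= gcdzC gcdzMDl gcdzN.
Qed.

Lemma ncf_fracE b s : ncf_ok (b :: s) ->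
  (ncf_frac (b :: s)).2 != 0 /\
  ncf (b :: s) = (ncf_frac (b :: s)).1%:~R / (ncf_frac (b :: s)).2%:~R.
Proof.
elim: s b => [|c s IH] b; first by rewrite /= mulr1 subr0 divr1.
move=> /andP[ok_cs]; rewrite ncf_cons2 ncf_frac_cons.
have [] := IH c ok_cs; move: (ncf_frac (c :: s)) => [n d] /= d_neq0 ->.
rewrite mulf_eq0 invr_eq0 !intr_eq0 negb_or => /andP[n_neq0 _].
split=> //; rewrite invf_div intrB intrM; field.
by rewrite intr_eq0.
Qed.

Definition even_index_sum (s : seq int) : int :=
  \sum_(0 <= i < size s | ~~ odd i) s`_i.

Lemma even_index_sum1 a : even_index_sum [:: a] = a.
Proof. by rewrite /even_index_sum big_mkcond big_nat1. Qed.

Lemma even_index_sum_cons2 a c s :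
  even_index_sum [:: a, c & s] = a + even_index_sum s.
Proof.
rewrite /even_index_sum /= big_mkcond !big_nat_recl //= add0r.
by rewrite [in RHS]big_mkcond; congr (_ + _); apply: eq_bigr => i _; rewrite negbK.
Qed.

Lemma ncf_frac_mod4 k s : size s = k.*2.+1 ->
  (forall i, (i < size s)%N -> ~~ odd i -> (2 %| s`_i)%Z) ->
  [/\ (2 %| even_index_sum s)%Z,
      (4 %| (ncf_frac s).1 - even_index_sum s)%Z &
      (2 %| (ncf_frac s).2 - 1)%Z].
Proof.
elim: k s => [|k IH] [|a [|c t]] //= size_s ev_s.
  split; rewrite ?mulr1 ?subr0 ?even_index_sum1 ?subrr ?dvdz0 //.
  exact: (ev_s 0%N).
have size_t : size t = k.*2.+1 by move: size_s; rewrite doubleS => -[].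
have ev_t i : (i < size t)%N -> ~~ odd i -> (2 %| t`_i)%Z
  by move=> lt_i ev_i; apply: (ev_s i.+2); rewrite /= ?negbK.
have [/dvdzP[m sum_t] /dvdzP[K num_t] /dvdzP[e den_t]] := IH t size_t ev_t.
have /dvdzP[a' /= ->] := ev_s 0%N isT isT.
rewrite even_index_sum_cons2 sum_t.
have -> : (ncf_frac t).1 = K * 4 + m * 2 by rewrite -sum_t -num_t subrK.
have -> : (ncf_frac t).2 = e * 2 + 1 by rewrite -den_t subrK.
split; apply/dvdzP.
- by exists (a' + m); ring.
- by exists (a' * c * K * 2 + a' * c * m - a' * e - a' - K - m); ring.
- by exists (c * K * 2 + c * m - e - 1); ring.
Qed.
Theorem lemma7 (N : nat) (b : seq int) (p q : int) :
  odd N -> size b = N ->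
  (forall i : nat, (i < N)%N -> ~~ odd i -> (2 %| b`_i)%Z) ->
  coprimez p q -> q != 0 ->
  ncf_ok b ->
  p%:~R / q%:~R = ncf b :> rat ->
  (p = (-1) ^+ (N.-1)./2 * (\sum_(0 <= i < N | ~~ odd i) b`_i) %[mod 4])%Z.
Proof.
move=> odd_N size_b ev_b cpq q_neq0 ok_b pq_ncf.
have N_half : N = (N./2).*2.+1 by rewrite -{1}(odd_double_half N) odd_N.
have size_b_half : size b = (N./2).*2.+1 by rewrite size_b.
rewrite -size_b in ev_b.
have [sum_even num_mod4 _] := ncf_frac_mod4 size_b_half ev_b.
have -> : (N.-1)./2 = N./2 by rewrite [in LHS]N_half /= doubleK.
have -> : \sum_(0 <= i < N | ~~ odd i) b`_i = even_index_sum b.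
  by rewrite /even_index_sum size_b.
case: b {size_b ev_b} size_b_half ok_b pq_ncf sum_even num_mod4 => [//|b1 s] _.
move=> /ncf_fracE[den_neq0 ->] pq_ncf sum_even num_mod4.
have [i ->] := coprimez_frac_sign cpq (coprimez_ncf_frac _) q_neq0 den_neq0 pq_ncf.
by apply/eqP; rewrite eqz_mod_dvd dvdz4_sign.
Qed.
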